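(* Consider the following birational transformations acting on $(q_1,p_1,q_2,p_2,t,s)$ and on parameters $(\alpha_1,\dots,\alpha_6)$ (constrained by $2\alpha_1+\alpha_2+\dots+\alpha_6=1$); each tuple lists images of $(q_1,p_1,q_2,p_2,t,s;\alpha_1,\dots,\alpha_6)$: $w_1$: $(q_1,p_1,q_2,p_2,t,s;\alpha_1+\alpha_2,-\alpha_2,\alpha_3,\alpha_4,\alpha_5,\alpha_6)$; $w_2$: $(q_1,p_1-\frac{\alpha_3}{q_1},q_2,p_2,t,s;\alpha_1+\alpha_3,\alpha_2,-\alpha_3,\alpha_4,\alpha_5,\alpha_6)$; $w_3$: $(q_1,p_1,q_2,p_2-\frac{\alpha_4}{q_2},t,s;\alpha_1+\alpha_4,\alpha_2,\alpha_3,-\alpha_4,\alpha_5,\alpha_6)$; $w_4$: $(q_1,p_1-\frac{\alpha_5}{q_1+q_2-1},q_2,p_2-\frac{\alpha_5}{q_1+q_2-1},t,s;\alpha_1+\alpha_5,\alpha_2,\alpha_3,\alpha_4,-\alpha_5,\alpha_6)$; $w_5$: $(q_1,p_1-\frac{\alpha_6}{q_1+tq_2/s-t},q_2,p_2-\frac{\alpha_6t}{s(q_1+tq_2/s-t)},t,s;\alpha_1+\alpha_6,\alpha_2,\alpha_3,\alpha_4,\alpha_5,-\alpha_6)$; $\pi_1$: with $A=q_1p_1+q_2p_2+\alpha_1$, $A'=A+\alpha_2$: $\big(\frac{p_1(q_1p_1-\alpha_3)}{AA'},-\frac{AA'}{p_1},\frac{p_2(q_2p_2-\alpha_4)}{AA'},-\frac{AA'}{p_2},\frac1t,\frac1s;-\alpha_1-\alpha_2-\alpha_3-\alpha_4,\alpha_2,\alpha_3,\alpha_4,1-\alpha_6,1-\alpha_5\big)$;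 $\pi_2$: $\big(1-q_1-q_2,-p_1,q_2,p_2-p_1,1-t,\frac{(t-1)s}{t-s};\alpha_1,\alpha_2,\alpha_5,\alpha_4,\alpha_3,\alpha_6\big)$; $\pi_3$: $\big(\frac{-sq_1-tq_2+ts}{(t-1)s},-(t-1)p_1,\frac{(t-s)q_2}{(t-1)s},-\frac{(t-1)(tp_1-sp_2)}{t-s},\frac{t}{t-1},\frac{t-s}{t-1};\alpha_1,\alpha_2,\alpha_6,\alpha_4,\alpha_5,\alpha_3\big)$; $\pi_4$: $\big(\frac{q_1}{t},tp_1,\frac{q_2}{s},sp_2,\frac1t,\frac1s;\alpha_1,\alpha_2,\alpha_3,\alpha_4,\alpha_6,\alpha_5\big)$; $\pi_5$: $\big(-\frac{q_1}{q_2},-p_1q_2,\frac1{q_2},-(q_2p_2+q_1p_1+\alpha_1)q_2,\frac{t}{s},\frac1s;\alpha_1,\alpha_4,\alpha_3,\alpha_2,\alpha_5,\alpha_6\big)$; $\pi_6$: $(q_2,p_2,q_1,p_1,s,t;\alpha_1,\alpha_2,\alpha_4,\alpha_3,\alpha_5,\alpha_6)$. Further, with $\gamma_0=1-\alpha_5-\alpha_6$, $\gamma_1=\alpha_6-\alpha_5$, $\gamma_2=\alpha_5-\alpha_2$, $\gamma_3=\alpha_2-\alpha_3$, $\gamma_4=\alpha_3-\alpha_4$, $\gamma_5=\alpha_4$ (so that $\alpha$'s are recovered from $\gamma$'s), define transformations $s_0,\dots,s_5$ (tuples list images of $(q_1,p_1,q_2,p_2,t,s;\gamma_0,\dots,\gamma_5)$),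 writing $E=2q_1p_1+2q_2p_2+\gamma_0-\gamma_3-2\gamma_4-3\gamma_5$, $F=2q_1p_1+2q_2p_2+\gamma_0+\gamma_3-\gamma_5$, $G=q_1p_1+q_2p_2+\frac{\gamma_0-\gamma_3-2\gamma_4-3\gamma_5}{2}$: $s_0$: $\big(\frac{4p_1(q_1p_1-\gamma_4-\gamma_5)}{EF},-\frac{EF}{4p_1},\frac{4p_2(q_2p_2-\gamma_5)}{EF},-\frac{EF}{4p_2},\frac1t,\frac1s;-\gamma_0,\gamma_1,\gamma_2+\gamma_0,\gamma_3,\gamma_4,\gamma_5\big)$; $s_1$: $\big(\frac{q_1}{t},tp_1,\frac{q_2}{s},sp_2,\frac1t,\frac1s;\gamma_0,-\gamma_1,\gamma_2+\gamma_1,\gamma_3,\gamma_4,\gamma_5\big)$; $s_2$: $\big(\frac{q_1}{q_1+q_2-1},(p_1-G)(q_1+q_2-1),\frac{q_2}{q_1+q_2-1},(p_2-G)(q_1+q_2-1),\frac{t}{t-1},\frac{s}{s-1};\gamma_0+\gamma_2,\gamma_1+\gamma_2,-\gamma_2,\gamma_3+\gamma_2,\gamma_4,\gamma_5\big)$; $s_3$: $\big(\frac1{q_1},-Gq_1,-\frac{q_2}{q_1},-q_1p_2,\frac1t,\frac{s}{t};\gamma_0,\gamma_1,\gamma_2+\gamma_3,-\gamma_3,\gamma_4+\gamma_3,\gamma_5\big)$; $s_4$: $(q_2,p_2,q_1,p_1,s,t;\gamma_0,\gamma_1,\gamma_2,\gamma_3+\gamma_4,-\gamma_4,\gamma_5+\gamma_4)$;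 $s_5$: $\big(q_1,p_1,q_2,p_2-\frac{\gamma_5}{q_2},t,s;\gamma_0,\gamma_1,\gamma_2,\gamma_3,\gamma_4+2\gamma_5,-\gamma_5\big)$. Then the group generated by $s_0,\dots,s_5$ (an affine Weyl group of type $B_5^{(1)}$) equals the group generated by $w_1,\dots,w_5,\pi_1,\dots,\pi_6$.
   Context: All these transformations are regarded as birational automorphisms of the space of variables $(q_1,p_1,q_2,p_2,t,s)$ together with parameters; the transformations $s_i$ are written in the parameters $\gamma_i$, which are linear functions of the $\alpha_i$ as given, and act on the $\alpha_i$ through this correspondence. Group equality means each generator of one family is a composition of generators of the other family. *)

From HB Require Import structures.
From mathcomp Require Import all_boot all_order all_algebra.
From mathcomp Require Import mpoly.
Set Implicit Arguments. Unset Strict Implicit. Unset Printing Implicit Defensive.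
Import Order.TTheory GRing.Theory Num.Theory.
Local Open Scope ring_scope.

Record st (F : Type) := St {
  q1 : F; p1 : F; q2 : F; p2 : F; tv : F; sv : F;
  a1 : F; a2 : F; a3 : F; a4 : F; a5 : F; a6 : F }.
Arguments St {F}.

Section Maps.
Variable F : fieldType.
Implicit Types x : st F.

Inductive WPgen := W1 | W2 | W3 | W4 | W5 | P1 | P2 | P3 | P4 | P5 | P6.

Definition wp_act (g : WPgen) x : st F :=
  let: St q1 p1 q2 p2 t s a1 a2 a3 a4 a5 a6 := x in
  match g with
  | W1 => St q1 p1 q2 p2 t s (a1 + a2) (- a2) a3 a4 a5 a6
  | W2 => St q1 (p1 - a3 / q1) q2 p2 t s (a1 + a3) a2 (- a3) a4 a5 a6
  | W3 => St q1 p1 q2 (p2 - a4 / q2) t s (a1 + a4) a2 a3 (- a4) a5 a6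
  | W4 => St q1 (p1 - a5 / (q1 + q2 - 1)) q2 (p2 - a5 / (q1 + q2 - 1)) t s
             (a1 + a5) a2 a3 a4 (- a5) a6
  | W5 => let D := q1 + t * q2 / s - t in
          St q1 (p1 - a6 / D) q2 (p2 - a6 * t / (s * D)) t s
             (a1 + a6) a2 a3 a4 a5 (- a6)
  | P1 => let A := q1 * p1 + q2 * p2 + a1 in let A' := A + a2 in
          St (p1 * (q1 * p1 - a3) / (A * A')) (- (A * A') / p1)
             (p2 * (q2 * p2 - a4) / (A * A')) (- (A * A') / p2) (1 / t) (1 / s)
             (- a1 - a2 - a3 - a4) a2 a3 a4 (1 - a6) (1 - a5)
  | P2 => St (1 - q1 - q2) (- p1) q2 (p2 - p1) (1 - t) ((t - 1) * s / (t - s))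
             a1 a2 a5 a4 a3 a6
  | P3 => St ((- s * q1 - t * q2 + t * s) / ((t - 1) * s)) (- (t - 1) * p1)
             ((t - s) * q2 / ((t - 1) * s)) (- ((t - 1) * (t * p1 - s * p2)) / (t - s))
             (t / (t - 1)) ((t - s) / (t - 1))
             a1 a2 a6 a4 a5 a3
  | P4 => St (q1 / t) (t * p1) (q2 / s) (s * p2) (1 / t) (1 / s)
             a1 a2 a3 a4 a6 a5
  | P5 => St (- q1 / q2) (- p1 * q2) (1 / q2) (- (q2 * p2 + q1 * p1 + a1) * q2)
             (t / s) (1 / s) a1 a4 a3 a2 a5 a6
  | P6 => St q2 p2 q1 p1 s t a1 a2 a4 a3 a5 a6
  end.

Inductive Sgen := S0 | S1 | S2 | S3 | S4 | S5.

Definition of_gam (q1 p1 q2 p2 t s g0 g1 g2 g3 g4 g5 : F) : st F :=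
  let a4 := g5 in let a3 := g4 + g5 in let a2 := g3 + g4 + g5 in
  let a5 := g2 + a2 in let a6 := g1 + a5 in
  let a1 := (g0 - a2 - a3 - a4) / 2 in
  St q1 p1 q2 p2 t s a1 a2 a3 a4 a5 a6.

Definition s_act (g : Sgen) x : st F :=
  let: St q1 p1 q2 p2 t s a1 a2 a3 a4 a5 a6 := x in
  let g0 := 1 - a5 - a6 in let g1 := a6 - a5 in let g2 := a5 - a2 in
  let g3 := a2 - a3 in let g4 := a3 - a4 in let g5 := a4 in
  let E := 2 * q1 * p1 + 2 * q2 * p2 + g0 - g3 - 2 * g4 - 3 * g5 in
  let Ff := 2 * q1 * p1 + 2 * q2 * p2 + g0 + g3 - g5 in
  let G := q1 * p1 + q2 * p2 + (g0 - g3 - 2 * g4 - 3 * g5) / 2 in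
  match g with
  | S0 => of_gam (4 * p1 * (q1 * p1 - g4 - g5) / (E * Ff)) (- (E * Ff) / (4 * p1))
                 (4 * p2 * (q2 * p2 - g5) / (E * Ff)) (- (E * Ff) / (4 * p2))
                 (1 / t) (1 / s)
                 (- g0) g1 (g2 + g0) g3 g4 g5
  | S1 => of_gam (q1 / t) (t * p1) (q2 / s) (s * p2) (1 / t) (1 / s)
                 g0 (- g1) (g2 + g1) g3 g4 g5
  | S2 => of_gam (q1 / (q1 + q2 - 1)) ((p1 - G) * (q1 + q2 - 1))
                 (q2 / (q1 + q2 - 1)) ((p2 - G) * (q1 + q2 - 1))
                 (t / (t - 1)) (s / (s - 1))
                 (g0 + g2) (g1 + g2) (- g2) (g3 + g2) g4 g5
  | S3 => of_gam (1 / q1) (- G * q1) (- q2 / q1) (- q1 * p2) (1 / t) (s / t)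
                 g0 g1 (g2 + g3) (- g3) (g4 + g3) g5
  | S4 => of_gam q2 p2 q1 p1 s t
                 g0 g1 g2 (g3 + g4) (- g4) (g5 + g4)
  | S5 => of_gam q1 p1 q2 (p2 - g5 / q2) t s
                 g0 g1 g2 g3 (g4 + 2 * g5) (- g5)
  end.

End Maps.

(* The field of rational functions over Q in the 11 independent coordinates
   q1,p1,q2,p2,t,s,a2,...,a6 (a1 is eliminated by 2a1+a2+...+a6 = 1). *)
Definition Kfun := {fraction {mpoly rat[11]}}.

Definition Xg (i : nat) : Kfun := tofrac ('X_(inord i) : {mpoly rat[11]}).

Definition generic : st Kfun :=
  St (Xg 0) (Xg 1) (Xg 2) (Xg 3) (Xg 4) (Xg 5)
     ((1 - Xg 6 - Xg 7 - Xg 8 - Xg 9 - Xg 10) / 2)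
     (Xg 6) (Xg 7) (Xg 8) (Xg 9) (Xg 10).

(* A composition of generators, evaluated on a point: [g1; g2; ...; gk]
   denotes g1 o g2 o ... o gk.  Two compositions of rational maps agree as
   birational maps iff they agree at the generic point. *)
Definition wp_word (F : fieldType) (l : seq WPgen) (x : st F) : st F :=
  foldr (fun g y => wp_act g y) x l.
Definition s_word (F : fieldType) (l : seq Sgen) (x : st F) : st F :=
  foldr (fun g y => s_act g y) x l.

From mathcomp Require Import all_boot all_order all_algebra.
From mathcomp Require Import mpoly ring.
Set Implicit Arguments. Unset Strict Implicit. Unset Printing Implicit Defensive.
Import GRing.Theory.
Local Open Scope ring_scope.

(* Each generator of either family is a short word in the other family, e.g.
   s_2 = pi_5 pi_2 pi_6 pi_5 pi_2 and w_1 = s_3 s_4 s_5 s_4 s_3, while w_4 and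
   w_5 are the conjugates of w_1 by s_2 and by s_1 s_2.  At the generic point
   such an identity of birational maps is an identity of rational functions,
   provided the denominators met along the way do not vanish; and an integer
   polynomial in the generic coordinates is nonzero as soon as it is nonzero at
   a single integer point. *)

Inductive pexpr :=
  | PVar of 'I_11
  | PConst of int
  | PAdd of pexpr & pexpr
  | PMul of pexpr & pexpr
  | POpp of pexpr.

Fixpoint pexpr_eval (R : comNzRingType) (x : 'I_11 -> R) (e : pexpr) : R :=
  match e with
  | PVar i => x i
  | PConst z => z%:~R
  | PAdd a b => pexpr_eval x a + pexpr_eval x b
  | PMul a b => pexpr_eval x a * pexpr_eval x b
  | POpp a => - pexpr_eval x a
  end.

Lemma meval_pexpr (v : 'I_11 -> int) e :
  meval (fun i => (v i)%:~R : rat) (pexpr_eval (fun i => 'X_i : {mpoly rat[11]}) e)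
  = (pexpr_eval v e)%:~R.
Proof.
elim: e => /= [i|z|a IHa b IHb|a IHa b IHb|a IHa].
- by rewrite mevalXU.
- by rewrite rmorph_int intz.
- by rewrite mevalD IHa IHb intrD.
- by rewrite mevalM IHa IHb intrM.
- by rewrite mevalN IHa mulrNz.
Qed.

Lemma Xg_pexpr e :
  pexpr_eval (fun i => Xg i) e = tofrac (pexpr_eval (fun i => 'X_i : {mpoly rat[11]}) e).
Proof.
elim: e => /= [i|z|a IHa b IHb|a IHa b IHb|a IHa].
- by rewrite /Xg inord_val.
- by rewrite rmorph_int.
- by rewrite IHa IHb rmorphD.
- by rewrite IHa IHb rmorphM.
- by rewrite IHa rmorphN.
Qed.

(* x 0, ..., x 10 are algebraically independent over Q, in a form that can be
   checked by evaluation at integer points. *)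
Definition generic_coords (F : fieldType) (x : nat -> F) : Prop :=
  forall (v : 'I_11 -> int) e, pexpr_eval v e != 0 -> pexpr_eval (fun i => x i) e != 0.

Lemma Xg_generic : generic_coords Xg.
Proof.
move=> v e; rewrite Xg_pexpr tofrac_eq0; apply: contra => /eqP e0.
by rewrite -(intr_eq0 rat) -meval_pexpr e0 meval0.
Qed.

Lemma generic_neq0 (F : fieldType) (x : nat -> F) (v : 'I_11 -> int) e y :
  generic_coords x -> pexpr_eval v e != 0 -> pexpr_eval (fun i => x i) e = y -> y != 0.
Proof. by move=> xgen /xgen + <-. Qed.

Lemma neq0_of_mul_eq (F : fieldType) (y d n : F) : y * d = n -> n != 0 -> y != 0.
Proof. by move=> <-; apply: contraNneq => ->; rewrite mul0r. Qed.

Definition hyperplane_point (F : fieldType) (x : nat -> F) : st F :=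
  St (x 0%N) (x 1%N) (x 2%N) (x 3%N) (x 4%N) (x 5%N)
     ((1 - x 6%N - x 7%N - x 8%N - x 9%N - x 10%N) / 2)
     (x 6%N) (x 7%N) (x 8%N) (x 9%N) (x 10%N).

Definition s1_coords (F : fieldType) (x : nat -> F) : nat -> F :=
  nth 0 [:: x 0%N / x 4%N; x 4%N * x 1%N; x 2%N / x 5%N; x 5%N * x 3%N;
            1 / x 4%N; 1 / x 5%N; x 6%N; x 7%N; x 8%N; x 10%N; x 9%N].

Definition s2_coords (F : fieldType) (x : nat -> F) : nat -> F :=
  let D := x 0%N + x 2%N - 1 in
  let G := x 0%N * x 1%N + x 2%N * x 3%N
           + (1 - x 6%N - x 7%N - x 8%N - x 9%N - x 10%N) / 2 in
  nth 0 [:: x 0%N / D; (x 1%N - G) * D; x 2%N / D; (x 3%N - G) * D;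
            x 4%N / (x 4%N - 1); x 5%N / (x 5%N - 1);
            x 9%N; x 7%N; x 8%N; x 6%N; x 10%N].

Ltac unfold_maps :=
  cbv beta iota zeta delta [s_word s_act of_gam wp_word wp_act foldr
                            hyperplane_point s1_coords s2_coords nth].

Ltac reify_pexpr x e :=
  lazymatch e with
  | @GRing.add _ ?a ?b =>
      let ra := reify_pexpr x a in let rb := reify_pexpr x b in constr:(PAdd ra rb)
  | @GRing.mul _ ?a ?b =>
      let ra := reify_pexpr x a in let rb := reify_pexpr x b in constr:(PMul ra rb)
  | @GRing.opp _ ?a => let ra := reify_pexpr x a in constr:(POpp ra)
  | @GRing.natmul _ (@GRing.one _) ?n => constr:(PConst (Posz n))
  | @GRing.one _ => constr:(PConst 1)
  | @GRing.zero _ => constr:(PConst 0)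
  | x ?n => constr:(PVar (@Ordinal 11 n isT))
  end.

(* Between them, these two points witness the nonvanishing of every
   polynomial that has to be shown nonzero below. *)
Definition test_point1 (i : 'I_11) : int :=
  nth 0 [:: 3; 5; 7; 11; 13; 17; 19; 23; 29; 31; 37] i.
Definition test_point2 (i : 'I_11) : int :=
  nth 0 [:: -4; 9; 2; -6; 21; -8; 15; -27; 33; 41; -10] i.

Ltac neq0_generic xgen :=
  lazymatch type of xgen with generic_coords ?x =>
  unfold_maps;
  repeat (first [apply: mulf_neq0 | apply: invr_neq0]);
  try done;
  lazymatch goal with |- is_true (?y != 0) =>
    let e := reify_pexpr x y in
    first [ apply: (generic_neq0 (v := test_point1) (e := e) xgen);
              [by vm_compute | by []]
          | apply: (generic_neq0 (v := test_point2) (e := e) xgen);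
              [by vm_compute | by []] ]
  end end.

Ltac field_generic xgen :=
  field; repeat (apply/andP; split); try done; neq0_generic xgen.

Ltac maps_generic xgen := unfold_maps; congr St; field_generic xgen.

Ltac neq0_hyp :=
  lazymatch goal with |- is_true (?e != 0) =>
    first [ done | exact: oner_neq0
          | match goal with h : is_true (?a != 0) |- _ => rewrite (_ : e = a) //; ring end ]
  end.

Ltac field_hyp :=
  unfold_maps; congr St; field; repeat (apply/andP; split); try done; neq0_hyp.

Section ExplicitConditions.
Variables (F : fieldType) (x : nat -> F).
Hypothesis two_neq0 : (2 : F) != 0.

Lemma wp_act_W1_word : x 0%N != 0 -> x 4%N != 0 ->
  wp_act W1 (hyperplane_point x) = s_word [:: S3; S4; S5; S4; S3] (hyperplane_point x).
Proof. by move=> q1_neq0 t_neq0; field_hyp. Qed.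

Lemma s_act_S1_coords : x 4%N != 0 -> x 5%N != 0 ->
  s_act S1 (hyperplane_point x) = hyperplane_point (s1_coords x).
Proof. by move=> t_neq0 s_neq0; field_hyp. Qed.

Lemma s_act_S2_coords : x 0%N + x 2%N - 1 != 0 -> x 4%N - 1 != 0 -> x 5%N - 1 != 0 ->
  s_act S2 (hyperplane_point x) = hyperplane_point (s2_coords x).
Proof. by move=> D_neq0 t1_neq0 s1_neq0; field_hyp. Qed.

End ExplicitConditions.

Section GenericPoint.
Variables (F : fieldType) (x : nat -> F).
Hypothesis x_generic : generic_coords x.
Local Notation X := (hyperplane_point x).

Lemma s_act_S0 : s_act S0 X = wp_word [:: P1] X.
Proof. by maps_generic x_generic. Qed.

Lemma s_act_S1 : s_act S1 X = wp_word [:: P4] X.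
Proof. by maps_generic x_generic. Qed.

Lemma s_act_S2 : s_act S2 X = wp_word [:: P5; P2; P6; P5; P2] X.
Proof. by maps_generic x_generic. Qed.

Lemma s_act_S3 : s_act S3 X = wp_word [:: P5; P6; P5] X.
Proof. by maps_generic x_generic. Qed.

Lemma s_act_S4 : s_act S4 X = wp_word [:: P6] X.
Proof. by maps_generic x_generic. Qed.

Lemma s_act_S5 : s_act S5 X = wp_word [:: W3] X.
Proof. by maps_generic x_generic. Qed.

Lemma wp_act_W1 : wp_act W1 X = s_word [:: S3; S4; S5; S4; S3] X.
Proof. by apply: wp_act_W1_word; neq0_generic x_generic. Qed.

Lemma wp_act_W2 : wp_act W2 X = s_word [:: S4; S5; S4] X.
Proof. by maps_generic x_generic. Qed.

Lemma wp_act_W3 : wp_act W3 X = s_word [:: S5] X.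
Proof. by maps_generic x_generic. Qed.

Lemma wp_act_W4 : wp_act W4 X = s_word [:: S2; S3; S4; S5; S4; S3; S2] X.
Proof.
have -> : s_word [:: S2; S3; S4; S5; S4; S3; S2] X
        = s_act S2 (s_word [:: S3; S4; S5; S4; S3] (s_act S2 X)) by [].
rewrite s_act_S2_coords -?wp_act_W1_word; first by maps_generic x_generic.
all: by neq0_generic x_generic.
Qed.

Lemma wp_act_W5 : wp_act W5 X = s_word [:: S1; S2; S3; S4; S5; S4; S3; S2; S1] X.
Proof.
have -> : s_word [:: S1; S2; S3; S4; S5; S4; S3; S2; S1] X
        = s_act S1 (s_act S2 (s_word [:: S3; S4; S5; S4; S3] (s_act S2 (s_act S1 X))))
  by [].
(* The conditions of s_act_S2_coords at s1_coords x are rational in x, so their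
   denominators are cleared before testing at integer points. *)
have D_neq0 : s1_coords x 0%N + s1_coords x 2%N - 1 != 0.
  apply: (@neq0_of_mul_eq _ _ (x 4%N * x 5%N)
            (x 0%N * x 5%N + x 2%N * x 4%N - x 4%N * x 5%N)).
    by unfold_maps; field_generic x_generic.
  by neq0_generic x_generic.
have t1_neq0 : s1_coords x 4%N - 1 != 0.
  apply: (@neq0_of_mul_eq _ _ (x 4%N) (1 - x 4%N)).
    by unfold_maps; field_generic x_generic.
  by neq0_generic x_generic.
have s1_neq0 : s1_coords x 5%N - 1 != 0.
  apply: (@neq0_of_mul_eq _ _ (x 5%N) (1 - x 5%N)).
    by unfold_maps; field_generic x_generic.
  by neq0_generic x_generic.
rewrite s_act_S1_coords ?s_act_S2_coords -?wp_act_W1_word //;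
  first by maps_generic x_generic.
all: by neq0_generic x_generic.
Qed.

Lemma wp_act_P1 : wp_act P1 X = s_word [:: S0] X.
Proof. by maps_generic x_generic. Qed.

Lemma wp_act_P2 : wp_act P2 X = s_word [:: S2; S3; S2] X.
Proof. by maps_generic x_generic. Qed.

Lemma wp_act_P3 : wp_act P3 X = s_word [:: S1; S2; S3; S2; S1] X.
Proof. by maps_generic x_generic. Qed.

Lemma wp_act_P4 : wp_act P4 X = s_word [:: S1] X.
Proof. by maps_generic x_generic. Qed.

Lemma wp_act_P5 : wp_act P5 X = s_word [:: S3; S4; S3] X.
Proof. by maps_generic x_generic. Qed.

Lemma wp_act_P6 : wp_act P6 X = s_word [:: S4] X.
Proof. by maps_generic x_generic. Qed.

End GenericPoint.

Theorem mainTheorem10 :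
  (forall g : Sgen, exists l : seq WPgen,
      s_act g generic = wp_word l generic) /\
  (forall g : WPgen, exists l : seq Sgen,
      wp_act g generic = s_word l generic).
Proof.
have Xgen := Xg_generic.
split; case.
- exact: ex_intro (s_act_S0 Xgen).
- exact: ex_intro (s_act_S1 Xgen).
- exact: ex_intro (s_act_S2 Xgen).
- exact: ex_intro (s_act_S3 Xgen).
- exact: ex_intro (s_act_S4 Xgen).
- exact: ex_intro (s_act_S5 Xgen).
- exact: ex_intro (wp_act_W1 Xgen).
- exact: ex_intro (wp_act_W2 Xgen).
- exact: ex_intro (wp_act_W3 Xgen).
- exact: ex_intro (wp_act_W4 Xgen).
- exact: ex_intro (wp_act_W5 Xgen).
- exact: ex_intro (wp_act_P1 Xgen).
- exact: ex_intro (wp_act_P2 Xgen).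
- exact: ex_intro (wp_act_P3 Xgen).
- exact: ex_intro (wp_act_P4 Xgen).
- exact: ex_intro (wp_act_P5 Xgen).
- exact: ex_intro (wp_act_P6 Xgen).
Qed.
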